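(* Let $k\geq 3$ be an integer, let $j$ be an integer with $2\leq j\leq k$, and let $0\leq a<b\leq 1$. If $(a,b)\subseteq\left[0,\frac{k-j}{k}\right)$ or $(a,b)\subseteq\left[\frac{j}{k},1\right)$, then $$d_k(a,b)\geq \frac{\log j}{\log k}.$$
   Context: $T_k:[0,1)\to[0,1)$ is the map $T_k(x)=kx \bmod 1$. For $0\leq a<b\leq 1$, $\mathcal{W}_k(a,b)=\{x\in[0,1)\ :\ T_k^n(x)\notin(a,b)\text{ for all } n\geq 0\}$, and $d_k(a,b)$ denotes the Hausdorff dimension of $\mathcal{W}_k(a,b)$. *)

From HB Require Import structures.
From mathcomp Require Import all_boot all_order all_algebra.
From mathcomp Require Import all_classical all_reals all_analysis.
Set Implicit Arguments. Unset Strict Implicit. Unset Printing Implicit Defensive.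
Import Order.TTheory GRing.Theory Num.Theory.
Import numFieldNormedType.Exports.
Local Open Scope classical_set_scope.
Local Open Scope ring_scope.

Section Defs.
Variable R : realType.

(* diameter of a subset of R (as an extended real; -oo for the empty set) *)
Definition diam (U : set R) : \bar R :=
  ereal_sup [set (`|x - y|)%:E | x in U & y in U].

Definition diam_pow (s : R) (U : set R) : R :=
  if U == set0 then 0 else powR (fine (diam U)) s.

Definition delta_cover (delta : R) (E : set R) (U : nat -> set R) : Prop :=
  E `<=` \bigcup_n U n /\ (forall n, (diam (U n) <= delta%:E)%E).

Definition hausdorff_content (s delta : R) (E : set R) : \bar R :=
  ereal_inf [set (\sum_(0 <= n <oo) (diam_pow s (U n))%:E)%E
            | U in delta_cover delta E].

(* s-dimensional Hausdorff (outer) measure: lim_{delta -> 0+} H^s_delta,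
   which equals the supremum over delta > 0 since H^s_delta is nonincreasing *)
Definition hausdorff_measure (s : R) (E : set R) : \bar R :=
  ereal_sup [set hausdorff_content s delta E | delta in [set d : R | 0 < d]].

Definition hausdorff_dim (E : set R) : \bar R :=
  ereal_inf [set s%:E | s in [set s : R | 0 <= s /\ hausdorff_measure s E = 0%E]].

Definition Tk (k : nat) (x : R) : R := k%:R * x - (Num.floor (k%:R * x))%:~R.

Definition Wk (k : nat) (a b : R) : set R :=
  [set x | 0 <= x < 1 /\ forall n : nat, ~ (a < iter n (Tk k) x < b)].

Definition dk (k : nat) (a b : R) : \bar R := hausdorff_dim (Wk k a b).

End Defs.

From HB Require Import structures.
From mathcomp Require Import all_boot all_order all_algebra.
From mathcomp Require Import all_classical all_reals all_analysis.
From mathcomp Require Import ring lra zify.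

Set Implicit Arguments.
Unset Strict Implicit.
Unset Printing Implicit Defensive.
Import Order.TTheory GRing.Theory Num.Theory.
Import numFieldNormedType.Exports.
Local Open Scope classical_set_scope.
Local Open Scope ring_scope.

(* Expanding x in base j with digits d_i, the map
     phi x = sum_i (e + d_i) k^-(i+1)
   sends [0,1) to points whose base-k digits all lie in {e, ..., e + j - 1}.
   It satisfies T_k o phi = phi o T_j and takes values in [e/k, (e+j)/k), so
   for e = k - j, resp. e = 0, its image is T_k-invariant and misses (a,b),
   i.e. lies in W_k(a,b).  Two points at distance >= j^-n have images at
   distance >= c k^-n, so phi^-1 is Hölder of exponent t = ln j / ln k.
   Pulling a delta-cover of the image back by phi gives a cover of [0,1) by
   sets of diameter <= C diam^t; comparing with Lebesgue measure shows that
   H^s of the image is bounded below for s <= t, whence dimension >= t. *)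

Lemma Tk_itv (R : realType) (k : nat) (x : R) : 0 <= Tk k x < 1.
Proof.
rewrite /Tk; have /andP[fl_le fl_gt] := floor_itv (k%:R * x).
by rewrite intrD in fl_gt; apply/andP; split; lra.
Qed.

Lemma iter_Tk_itv (R : realType) (k n : nat) (x : R) :
  0 <= x < 1 -> 0 <= iter n (Tk k) x < 1.
Proof. by case: n => [|n] //= _; exact: Tk_itv. Qed.

Lemma dist_lt1 (R : realType) (x y : R) :
  0 <= x < 1 -> 0 <= y < 1 -> `|x - y| < 1.
Proof. by move=> /andP[? ?] /andP[? ?]; rewrite ltr_norml; apply/andP; split; lra. Qed.

Lemma exists_invXn_lt (R : realType) (m : nat) (eps : R) :
  (1 < m)%N -> 0 < eps -> exists n, (m%:R ^+ n)^-1 < eps.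
Proof.
move=> m_gt1 eps_gt0; set N := (Num.truncn eps^-1).+1; exists N.
have m_gt0 : (0 : R) < m%:R by rewrite ltr0n; lia.
have N_gt : eps^-1 < m%:R ^+ N.
  by apply: lt_trans (truncnS_gt _) _; rewrite -natrX ltr_nat ltn_expl.
by rewrite -[eps]invrK ltf_pV2 ?posrE ?invr_gt0 ?exprn_gt0.
Qed.

Lemma invXn_powR_ln_div (R : realType) (p q : R) (n : nat) :
  1 < p -> 0 < q -> (p ^+ n)^-1 `^ (ln q / ln p) = (q ^+ n)^-1.
Proof.
move=> p_gt1 q_gt0; have p_gt0 : 0 < p by exact: lt_trans p_gt1.
apply: ln_inj; rewrite ?posrE ?powR_gt0 ?invr_gt0 ?exprn_gt0 //.
rewrite ln_powR !lnV ?posrE ?exprn_gt0 // !lnXn //.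
by rewrite mulrN mulrnAr divfK // gt_eqF // ln_gt0.
Qed.

Section Diameter.
Variable R : realType.
Implicit Types (U : set R) (x y d s t : R).

Lemma diam_ge_dist U x y : U x -> U y -> ((`|x - y|)%:E <= diam U)%E.
Proof. by move=> Ux Uy; apply: ereal_sup_ubound; exists x => //; exists y. Qed.

Lemma fine_diam_set0 : fine (diam (@set0 R)) = 0.
Proof.
rewrite /diam (_ : [set _ | x in set0 & y in set0] = set0) ?ereal_sup0 //.
by apply/seteqP; split => z // [x []].
Qed.

Lemma diam_fineK U x d : U x -> (diam U <= d%:E)%E -> (fine (diam U))%:E = diam U.
Proof.
move=> Ux diamU; apply: fineK.
have diam_ge0 : (0 <= diam U)%E by have := diam_ge_dist Ux Ux; rewrite subrr normr0.
by rewrite ge0_fin_numE // (le_lt_trans diamU) // ltey.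
Qed.

Lemma dist_le_fine_diam U x y d :
  (diam U <= d%:E)%E -> U x -> U y -> `|x - y| <= fine (diam U).
Proof. by move=> diamU Ux Uy; rewrite -lee_fin (diam_fineK Ux diamU) diam_ge_dist. Qed.

Lemma fine_diam_itv U x d : U x -> (diam U <= d%:E)%E -> 0 <= fine (diam U) <= d.
Proof.
move=> Ux diamU; rewrite -!lee_fin (diam_fineK Ux diamU) diamU andbT.
by have := diam_ge_dist Ux Ux; rewrite subrr normr0.
Qed.

Lemma diam_pow_ge0 s U : 0 <= diam_pow s U.
Proof. by rewrite /diam_pow; case: ifP => // _; exact: powR_ge0. Qed.

Lemma fine_diam_powR_le s t U :
  0 < t -> s <= t -> (diam U <= 1%:E)%E -> fine (diam U) `^ t <= diam_pow s U.
Proof.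
move=> t_gt0 s_le_t diamU; rewrite /diam_pow; case: ifPn => [/eqP ->|/set0P[x Ux]].
  by rewrite fine_diam_set0 powR0 // gt_eqF.
have /andP[D_ge0 D_le1] := fine_diam_itv Ux diamU.
have [->|D_neq0] := eqVneq (fine (diam U)) 0; first by rewrite powR0 ?powR_ge0 // gt_eqF.
by apply: ger_powR => //; rewrite D_le1 andbT lt_neqAle eq_sym D_neq0.
Qed.

Lemma sub_itv_of_dist_le (V : set R) d : 0 <= d ->
  (forall x y, V x -> V y -> `|x - y| <= d) ->
  exists I : interval R, V `<=` [set` I] /\ (lebesgue_measure [set` I] <= (2 * d)%:E)%E.
Proof.
move=> d_ge0 distV; have [[v Vv]|V0] := pselect (exists v, V v).
  exists `[v - d, v + d]; split.
    move=> x Vx; rewrite /= in_itv /=; have := distV x v Vx Vv.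
    by rewrite ler_norml => /andP[? ?]; apply/andP; split; lra.
  rewrite lebesgue_measure_itv /= lte_fin.
  by case: ifPn => _; rewrite -?EFinD lee_fin; lra.
exists `]0, 0[; split; first by move=> x Vx; case: V0; exists x.
by rewrite lebesgue_measure_itv /= lte_fin ltxx lee_fin mulr_ge0.
Qed.

Lemma lebesgue_measure_itv_le_cover (A : interval R) (V : nat -> set R) (r : nat -> R) :
  (forall n, 0 <= r n) ->
  (forall n x y, V n x -> V n y -> `|x - y| <= r n) ->
  [set` A] `<=` \bigcup_n V n ->
  (lebesgue_measure [set` A] <= \sum_(0 <= n <oo) (2 * r n)%:E)%E.
Proof.
move=> r_ge0 distV AV.
have [I VI] := choice (fun n => sub_itv_of_dist_le (r_ge0 n) (distV n)).
apply: le_trans (_ : \sum_(0 <= n <oo) lebesgue_measure [set` I n] <= _)%E.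
  apply: measure_sigma_subadditive; [by move=> n; exact: measurable_itv|exact: measurable_itv|].
  by move=> x /AV[n _ Vnx]; exists n => //; exact: (VI n).1.
by apply: lee_nneseries => n *; [exact: measure_ge0 | exact: (VI n).2].
Qed.

End Diameter.

Section InverseHolder.
Variables (R : realType) (E : set R) (f : R -> R) (C t : R).
Hypotheses (C_gt0 : 0 < C) (t_gt0 : 0 < t).
Hypothesis f_in : forall x, 0 <= x < 1 -> E (f x).
Hypothesis f_inv_holder : forall x y, 0 <= x < 1 -> 0 <= y < 1 ->
  `|x - y| <= C * `|f x - f y| `^ t.

Lemma cover_diam_pow_sum_ge s U : s <= t -> delta_cover 1 E U ->
  (((2 * C)^-1)%:E <= \sum_(0 <= n <oo) (diam_pow s (U n))%:E)%E.
Proof.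
move=> s_le_t [EU diamU].
pose D n := fine (diam (U n)).
pose V n := [set x : R | 0 <= x < 1 /\ U n (f x)].
have distV n x y : V n x -> V n y -> `|x - y| <= C * D n `^ t.
  move=> [x01 Ufx] [y01 Ufy]; apply: le_trans (f_inv_holder x01 y01) _.
  have /andP[D_ge0 _] := fine_diam_itv Ufx (diamU n).
  rewrite ler_pM2l //; apply: (ge0_ler_powR (ltW t_gt0)); rewrite ?nnegrE //.
  exact: dist_le_fine_diam (diamU n) Ufx Ufy.
have cover01 : [set` `[(0 : R), 1[] `<=` \bigcup_n V n.
  move=> x; rewrite /= in_itv /= => x01.
  by have [n _ Unfx] := EU _ (f_in x01); exists n.
have := lebesgue_measure_itv_le_cover _ distV cover01.
rewrite lebesgue_measure_itv /= lte_fin ltr01 oppr0 adde0 => sum_ge1.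
rewrite -[leLHS]mule1 lee_pdivrMl ?mulr_gt0 //.
rewrite -nneseriesZl; last by move=> n _; rewrite lee_fin diam_pow_ge0.
apply: le_trans (sum_ge1 _) _ => [n|]; first by rewrite mulr_ge0 ?powR_ge0 // ltW.
apply: lee_nneseries => n _; first by rewrite lee_fin !mulr_ge0 ?powR_ge0 // ltW.
rewrite -EFinM lee_fin -mulrA ler_pM2l // ler_pM2l //.
exact: fine_diam_powR_le.
Qed.

Lemma hausdorff_measure_ge s : s <= t ->
  (((2 * C)^-1)%:E <= hausdorff_measure s E)%E.
Proof.
move=> s_le_t; apply: le_trans (_ : hausdorff_content s 1 E <= _)%E.
  by apply: le_ereal_inf_tmp => _ [U EU <-]; exact: cover_diam_pow_sum_ge.
by apply: ereal_sup_ubound; exists 1; rewrite /= ?ltr01.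
Qed.

Lemma hausdorff_dim_ge : (t%:E <= hausdorff_dim E)%E.
Proof.
apply: le_ereal_inf_tmp => _ [s [_ Hs0] <-]; rewrite lee_fin leNgt; apply/negP => s_lt_t.
by have := hausdorff_measure_ge (ltW s_lt_t); rewrite Hs0 lee_fin leNgt invr_gt0 mulr_gt0.
Qed.

End InverseHolder.

Section DigitEmbedding.
Variables (R : realType) (j k e : nat).
Hypotheses (j_gt1 : (1 < j)%N) (j_lt_k : (j < k)%N) (ejk : (e + j <= k)%N).

Local Notation jr := (j%:R : R).
Local Notation kr := (k%:R : R).
Local Notation er := (e%:R : R).

Let jr_gt1 : 1 < jr. Proof. by rewrite ltr1n. Qed.
Let jr_gt0 : 0 < jr. Proof. exact: lt_trans jr_gt1. Qed.
Let kr_ge_jr1 : jr + 1 <= kr. Proof. by rewrite -(natrD _ j 1) ler_nat addn1. Qed.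
Let kr_ge_ej : er + jr <= kr. Proof. by rewrite -natrD ler_nat. Qed.
Let kr_gt1 : 1 < kr. Proof. by rewrite ltr1n; lia. Qed.
Let kr_gt0 : 0 < kr. Proof. exact: lt_trans kr_gt1. Qed.
Let t_gt0 : 0 < ln jr / ln kr. Proof. by rewrite divr_gt0 ?ln_gt0. Qed.

Definition digit (x : R) : R := (Num.floor (jr * x))%:~R.

Lemma TjE x : Tk j x = jr * x - digit x. Proof. by []. Qed.

Lemma digit_bounds x : 0 <= x < 1 -> 0 <= digit x <= jr - 1.
Proof.
move=> /andP[x_ge0 x_lt1]; apply/andP; split.
  by rewrite ler0z floor_ge0 mulr_ge0.
have : Num.floor (jr * x) <= j%:Z - 1.
  by rewrite -ltzD1 subrK floor_lt_int -[X in _ < X]mulr1 ltr_pM2l.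
by rewrite -(ler_int R) intrB.
Qed.

Lemma digit_dist_ge1 x y : digit x != digit y -> 1 <= `|digit x - digit y|.
Proof. by rewrite /digit eqr_int -intrB -intr_norm ler1z => neq; lia. Qed.

Let lo : R := er / (kr - 1).
Let hi : R := (er + jr - 1) / (kr - 1).

Let kr1_gt0 : 0 < kr - 1. Proof. by rewrite subr_gt0. Qed.
Let lo_fix : lo * kr = er + lo. Proof. by rewrite /lo; field; rewrite gt_eqF. Qed.
Let hi_fix : hi * kr = er + jr - 1 + hi. Proof. by rewrite /hi; field; rewrite gt_eqF. Qed.
Let lo_ge0 : 0 <= lo. Proof. by rewrite divr_ge0 // ltW. Qed.
Let hi_le1 : hi <= 1. Proof. by rewrite ler_pdivrMr // mul1r; have := kr_ge_ej; lra. Qed.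
Let hi_sub_lo : hi - lo = (jr - 1) / (kr - 1).
Proof. by rewrite /hi /lo -mulrBl; congr (_ / _); lra. Qed.
Let hi_sub_lo_ge0 : 0 <= hi - lo. Proof. by rewrite hi_sub_lo divr_ge0 ?ltW //; have := jr_gt1; lra. Qed.
Let hi_sub_lo_lt1 : hi - lo < 1.
Proof. by rewrite hi_sub_lo ltr_pdivrMr // mul1r; have := kr_ge_jr1; lra. Qed.

(* phi_approx n x keeps the first n digits of x and continues with digit 0,
   whose tail is the fixed point lo of y |-> (e + y) / k; hence it increases
   with n, and phi is its limit. *)
Fixpoint phi_approx (n : nat) (x : R) : R :=
  if n is n'.+1 then (er + digit x + phi_approx n' (Tk j x)) / kr else lo.

Lemma phi_approx_bounds n x : 0 <= x < 1 -> lo <= phi_approx n x <= hi.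
Proof.
elim: n x => [|n IH] x x01 /=; first by rewrite lexx -subr_ge0.
have /andP[? ?] := IH _ (Tk_itv j x); have /andP[? ?] := digit_bounds x01.
by rewrite ler_pdivlMr // ler_pdivrMr // lo_fix hi_fix; apply/andP; split; lra.
Qed.

Lemma phi_approx_le_succ n x : 0 <= x < 1 -> phi_approx n x <= phi_approx n.+1 x.
Proof.
elim: n x => [|n IH] x x01.
  by rewrite /= ler_pdivlMr // lo_fix; have /andP[? ?] := digit_bounds x01; lra.
by rewrite [phi_approx n.+1 x]/= [phi_approx n.+2 x]/= ler_pM2r ?invr_gt0 // lerD2l IH ?Tk_itv.
Qed.

Definition phi (x : R) : R := sup (range (phi_approx ^~ x)).

Let phi_has_sup x : 0 <= x < 1 -> has_sup (range (phi_approx ^~ x)).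
Proof.
move=> x01; split; first by exists (phi_approx 0 x), 0%N.
by exists hi => _ [n _ <-]; have /andP[] := phi_approx_bounds n x01.
Qed.

Lemma phi_approx_le_phi n x : 0 <= x < 1 -> phi_approx n x <= phi x.
Proof. by move=> x01; apply: (sup_upper_bound (phi_has_sup x01)); exists n. Qed.

Lemma phi_le x c : (forall n, phi_approx n x <= c) -> phi x <= c.
Proof. by move=> le_c; apply: ge_sup; [exists (phi_approx 0 x), 0%N | move=> _ [n _ <-]]. Qed.

Lemma phi_bounds x : 0 <= x < 1 -> lo <= phi x <= hi.
Proof.
move=> x01; rewrite (phi_approx_le_phi 0 x01) /=.
by apply: phi_le => n; have /andP[] := phi_approx_bounds n x01.
Qed.

Lemma phi_rec x : 0 <= x < 1 -> phi x = (er + digit x + phi (Tk j x)) / kr.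
Proof.
move=> x01; have Tx01 := Tk_itv j x.
apply/eqP; rewrite eq_le; apply/andP; split.
  apply: phi_le => -[|n].
    apply: le_trans (phi_approx_le_succ 0 x01) _.
    by rewrite /= ler_pM2r ?invr_gt0 // lerD2l; have /andP[] := phi_bounds Tx01.
  by rewrite /= ler_pM2r ?invr_gt0 // lerD2l phi_approx_le_phi.
rewrite ler_pdivrMr //.
suff : phi (Tk j x) <= phi x * kr - (er + digit x) by lra.
apply: phi_le => n; have := phi_approx_le_phi n.+1 x01.
by rewrite /= ler_pdivrMr //; lra.
Qed.

Lemma phi_sub x y : 0 <= x < 1 -> 0 <= y < 1 ->
  phi x - phi y = (digit x - digit y + (phi (Tk j x) - phi (Tk j y))) / kr.
Proof. by move=> x01 y01; rewrite (phi_rec x01) (phi_rec y01) -mulrBl; congr (_ / _); lra. Qed.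

(* Since phi (T_j x) <= hi <= 1, the value 1 forces e + j = k and the top
   digit j - 1; iterating, 1 - T_j^n x = j^n (1 - x) would exceed 1. *)
Lemma phi_eq1_step x : 0 <= x < 1 -> phi x = 1 ->
  phi (Tk j x) = 1 /\ 1 - Tk j x = jr * (1 - x).
Proof.
move=> x01 phix1; have /andP[? ?] := phi_bounds (Tk_itv j x).
have /andP[? ?] := digit_bounds x01.
have := phi_rec x01; rewrite phix1 => /(congr1 ( *%R^~ kr)).
have := hi_le1; have := kr_ge_ej.
by rewrite divfK ?gt_eqF // mul1r TjE => ? ? ?; split; lra.
Qed.

Lemma phi_lt1 x : 0 <= x < 1 -> phi x < 1.
Proof.
move=> x01; rewrite ltNge; apply/negP => phix_ge1.
have phix1 : phi x = 1.
  by apply/eqP; rewrite eq_le phix_ge1 andbT (le_trans _ hi_le1) //; case/andP: (phi_bounds x01).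
have orbit n : phi (iter n (Tk j) x) = 1 /\ 1 - iter n (Tk j) x = jr ^+ n * (1 - x).
  elim: n => [|n [IH1 IH2]]; first by rewrite /= expr0 mul1r.
  have [-> ->] := phi_eq1_step (iter_Tk_itv j n x01) IH1.
  by rewrite IH2 exprS mulrA.
have [|n small] := exists_invXn_lt j_gt1 (_ : 0 < 1 - x); first by case/andP: x01; lra.
have [_ orbit_n] := orbit n; have /andP[? _] := iter_Tk_itv j n x01.
have : jr ^+ n * (1 - x) <= 1 by lra.
by rewrite -ler_pdivlMl ?exprn_gt0 // mulr1; lra.
Qed.

Lemma phi_itv01 x : 0 <= x < 1 -> 0 <= phi x < 1.
Proof.
move=> x01; rewrite phi_lt1 // andbT.
by apply: le_trans lo_ge0 _; case/andP: (phi_bounds x01).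
Qed.

Lemma phi_itv x : 0 <= x < 1 -> er / kr <= phi x < (er + jr) / kr.
Proof.
move=> x01; have /andP[? ?] := digit_bounds x01.
have /andP[? ?] := phi_itv01 (Tk_itv j x).
rewrite (phi_rec x01) ler_pM2r ?invr_gt0 // ltr_pM2r ?invr_gt0 //.
by apply/andP; split; lra.
Qed.

Lemma Tk_phi x : 0 <= x < 1 -> Tk k (phi x) = phi (Tk j x).
Proof.
move=> x01; have Tx01 := Tk_itv j x.
have k_phi : kr * phi x = er + digit x + phi (Tk j x).
  by rewrite (phi_rec x01) mulrC divfK // gt_eqF.
have /andP[? ?] := phi_itv01 Tx01.
have floor_k_phi : Num.floor (kr * phi x) = e%:Z + Num.floor (jr * x).
  by apply: floor_def; rewrite k_phi !intrD; apply/andP; split; rewrite /digit in k_phi *; lra.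
by rewrite /Tk floor_k_phi k_phi intrD /digit; lra.
Qed.

Lemma iter_Tk_phi n x : 0 <= x < 1 -> iter n (Tk k) (phi x) = phi (iter n (Tk j) x).
Proof. by move=> x01; elim: n => [|n IH] //=; rewrite IH Tk_phi // iter_Tk_itv. Qed.

(* Images of points with different first digits are at least gap apart. *)
Let gap : R := (1 - (hi - lo)) / kr.
Let gap_gt0 : 0 < gap. Proof. by rewrite divr_gt0 // subr_gt0. Qed.

Lemma phi_sep n x y : 0 <= x < 1 -> 0 <= y < 1 ->
  (jr ^+ n)^-1 <= `|x - y| -> gap / kr ^+ n <= `|phi x - phi y|.
Proof.
elim: n x y => [|n IH] x y x01 y01.
  by rewrite expr0 invr1 => ?; have := dist_lt1 x01 y01; lra.
move=> far; have Tx01 := Tk_itv j x; have Ty01 := Tk_itv j y.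
rewrite phi_sub // normrM (ger0_norm (_ : 0 <= kr^-1)) ?invr_ge0 ?(ltW kr_gt0) //.
have [same|diff] := eqVneq (digit x) (digit y).
  rewrite same subrr add0r exprS invfM (mulrC kr^-1) mulrA ler_pM2r ?invr_gt0 //.
  apply: IH => //; have -> : Tk j x - Tk j y = jr * (x - y) by rewrite !TjE same; ring.
  move: far; rewrite exprS invfM normrM (ger0_norm (ltW jr_gt0)).
  by rewrite -ler_pdivlMl ?invr_gt0 // invrK.
apply: le_trans (_ : gap <= _).
  by rewrite ler_pdivrMr ?exprn_gt0 // ler_peMr ?(ltW gap_gt0) // exprn_ege1 // ltW.
rewrite /gap ler_pM2r ?invr_gt0 //; apply: le_trans (lerB_normD _ _).
have := digit_dist_ge1 diff.
suff : `|phi (Tk j x) - phi (Tk j y)| <= hi - lo by lra.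
have /andP[? ?] := phi_bounds Tx01; have /andP[? ?] := phi_bounds Ty01.
by rewrite ler_norml; apply/andP; split; lra.
Qed.

Lemma phi_inv_holder : exists2 C, 0 < C & forall x y, 0 <= x < 1 -> 0 <= y < 1 ->
  `|x - y| <= C * `|phi x - phi y| `^ (ln jr / ln kr).
Proof.
set t := ln jr / ln kr; exists (jr * gap^-1 `^ t); first by rewrite mulr_gt0 ?powR_gt0 ?invr_gt0.
move=> x y x01 y01; have [->|neq] := eqVneq x y.
  by rewrite subrr normr0 !mulr_ge0 ?powR_ge0 // ltW.
have xy_gt0 : 0 < `|x - y| by rewrite normr_gt0 subr_eq0.
have ex_close : exists n, (jr ^+ n)^-1 <= `|x - y|.
  by have [n ?] := exists_invXn_lt j_gt1 xy_gt0; exists n; exact: ltW.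
have [[|n] close minn] := ex_minnP ex_close.
  by move: close; rewrite expr0 invr1; have := dist_lt1 x01 y01; lra.
have near : `|x - y| < (jr ^+ n)^-1 by rewrite ltNge; apply/negP => /minn; rewrite ltnn.
have close_t : (jr ^+ n.+1)^-1 <= gap^-1 `^ t * `|phi x - phi y| `^ t.
  rewrite -powRM ?invr_ge0 ?(ltW gap_gt0) // -(invXn_powR_ln_div _ kr_gt1 jr_gt0).
  apply: (ge0_ler_powR (ltW t_gt0)); rewrite ?nnegrE ?mulr_ge0 ?invr_ge0 ?(ltW gap_gt0) //.
  rewrite -(ler_pM2l gap_gt0) mulrA mulfV ?mul1r ?gt_eqF //.
  exact: phi_sep close.
apply: le_trans (ltW near) _.
rewrite -mulrA (_ : (jr ^+ n)^-1 = jr * (jr ^+ n.+1)^-1) ?ler_pM2l //.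
by rewrite exprS invfM mulrA mulfV ?mul1r // gt_eqF.
Qed.

End DigitEmbedding.

Lemma ln_div_le_dk (R : realType) (j k e : nat) (a b : R) :
  (1 < j)%N -> (j < k)%N -> (e + j <= k)%N ->
  (forall x, 0 <= x < 1 -> ~ (a < phi j k e x < b)) ->
  ((ln (j%:R : R) / ln (k%:R : R))%:E <= dk k a b)%E.
Proof.
move=> j_gt1 j_lt_k ejk avoid.
have [C C_gt0 holder] := phi_inv_holder R j_gt1 j_lt_k ejk.
have t_gt0 : 0 < ln (j%:R : R) / ln k%:R by rewrite divr_gt0 ?ln_gt0 ?ltr1n //; lia.
apply: (hausdorff_dim_ge C_gt0 t_gt0 _ holder) => x x01; split; first exact: phi_itv01.
by move=> n; rewrite iter_Tk_phi //; apply/avoid/iter_Tk_itv.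
Qed.

Theorem mainTheorem3 (R : realType) (k j : nat) (a b : R) :
  (3 <= k)%N -> (2 <= j <= k)%N ->
  0 <= a -> a < b -> b <= 1 ->
  ([set x : R | a < x < b] `<=` [set x : R | 0 <= x < (k - j)%:R / k%:R]
   \/ [set x : R | a < x < b] `<=` [set x : R | j%:R / k%:R <= x < 1]) ->
  ((ln (j%:R : R) / ln (k%:R : R))%:E <= dk k a b)%E.
Proof.
move=> k_ge3 /andP[j_ge2 j_le_k] a_ge0 a_lt_b b_le1 ab_sub.
have mid_ab : a < (a + b) / 2 < b by apply/andP; split; lra.
have k_gt0 : (0 : R) < k%:R by rewrite ltr0n; lia.
case: ab_sub => ab_sub.
- have /andP[_ mid_lt] := ab_sub _ mid_ab.
  have j_lt_k : (j < k)%N.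
    rewrite ltn_neqAle j_le_k andbT; apply: contraTneq mid_lt => ->.
    by rewrite subnn mul0r -leNgt; lra.
  have ejk : (k - j + j <= k)%N by rewrite subnK // ltnW.
  apply: (ln_div_le_dk j_ge2 j_lt_k ejk) => x x01 /ab_sub/andP[_ phi_lt].
  by have /andP[phi_ge _] := phi_itv j_ge2 j_lt_k ejk x01; lra.
- have /andP[mid_ge mid_lt1] := ab_sub _ mid_ab.
  have j_lt_k : (j < k)%N.
    rewrite ltn_neqAle j_le_k andbT; apply: contraTneq mid_ge => ->.
    by rewrite divff ?gt_eqF // -ltNge.
  have ejk : (0 + j <= k)%N by rewrite add0n ltnW.
  apply: (ln_div_le_dk j_ge2 j_lt_k ejk) => x x01 /ab_sub/andP[phi_ge _].
  by have /andP[_] := phi_itv j_ge2 j_lt_k ejk x01; rewrite add0r; lra.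
Qed.
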